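(* Let $|v_1\rangle,\dots,|v_8\rangle$ be unit vectors in $\mathbb{R}^3$ realizing the Clifton $01$-gadget measurement configuration, i.e., $\langle v_i|v_j\rangle = 0$ for every pair $\{i,j\}$ in $\{\{1,2\},\{1,3\},\{2,4\},\{2,6\},\{4,6\},\{3,5\},\{3,7\},\{5,7\},\{4,5\},\{6,8\},\{7,8\}\}$, and suppose they are measured on a state $|\psi\rangle$ for which the observed probabilities are $P(|v_1\rangle) = |\langle \psi|v_1\rangle|^2 = 1$ and $P(|v_8\rangle) = |\langle\psi|v_8\rangle|^2 = 1/9$. Then the set of projectors $\{|v_i\rangle\langle v_i|\}_{i=1}^8$ realizing this configuration in $\mathbb{R}^3$ is unique up to a common unitary (orthogonal) rotation and up to the relabelling $v_2\leftrightarrow v_3$, $v_4\leftrightarrow v_5$, $v_6\leftrightarrow v_7$.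
   Context: The Clifton $01$-gadget (Clifton bug) is the graph on vertices $1,\dots,8$ with the eleven edges listed in the claim; vertices $1$ and $8$ are its two distinguished non-adjacent vertices. $P(|v\rangle)$ denotes the probability of the outcome corresponding to the projector $|v\rangle\langle v|$ when measuring the state $|\psi\rangle$. *)

From HB Require Import structures.
From mathcomp Require Import all_boot all_order all_algebra.
From mathcomp Require Import reals.
Set Implicit Arguments. Unset Strict Implicit. Unset Printing Implicit Defensive.
Import Order.TTheory GRing.Theory Num.Theory.
Local Open Scope ring_scope.

Definition dotv (R : realType) (u v : 'rV[R]_3) : R := (u *m v^T) 0 0.

(* projector |v><v| (column-vector convention: v^T *m v) *)
Definition vproj (R : realType) (v : 'rV[R]_3) : 'M[R]_3 := v^T *m v.

Definition prob (R : realType) (psi v : 'rV[R]_3) : R := (dotv psi v) ^+ 2.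

Definition clifton_edges : seq (nat * nat) :=
  [:: (1,2); (1,3); (2,4); (2,6); (4,6); (3,5); (3,7); (5,7); (4,5); (6,8); (7,8)]%N.

Definition clifton_config (R : realType) (v : nat -> 'rV[R]_3) : Prop :=
  (forall i : nat, (1 <= i <= 8)%N -> dotv (v i) (v i) = 1) /\
  (forall i j : nat, (i, j) \in clifton_edges -> dotv (v i) (v j) = 0).

Definition clifton_swap (i : nat) : nat :=
  match i with
  | 2 => 3 | 3 => 2 | 4 => 5 | 5 => 4 | 6 => 7 | 7 => 6 | _ => i
  end%N.

(* In a frame with v4 = e1 and v5 = e2 we have v2 = (0, p, q) and v3 = (t, 0, r), and
   orthogonality puts v6, v7, v1, v8 on the lines of e1 × v2, e2 × v3, v2 × v3 and v6 × v7.
   With x = p^2 and y = t^2 the condition <v1|v8>^2 = 1/9 becomes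
   (x + y - xy)(1 - xy) = 9 x(1-x) y(1-y); the two sides differ by a sum of squares, so
   x = y = 1/2, the other roots making v2 ∥ v3 or v6 ∥ v7 and hence <v1|v8> = 0. Up to
   reflections in coordinate planes every v_i then lies on a fixed line, so all
   realizations share their projectors up to an orthogonal map. *)

From HB Require Import structures.
From mathcomp Require Import all_boot all_order all_algebra.
From mathcomp Require Import reals.
From mathcomp Require Import ring lra.
Import Order.TTheory GRing.Theory Num.Theory.
Local Open Scope ring_scope.
Set Implicit Arguments. Unset Strict Implicit. Unset Printing Implicit Defensive.

Section Vectors.
Variable R : realType.
Implicit Types (a b c k : R) (x y z : 'rV[R]_3) (M N : 'M[R]_3).

Definition vec3 a b c : 'rV[R]_3 := \row_j [:: a; b; c]`_j.

Lemma row3_eta x : x = vec3 (x 0 0) (x 0 1) (x 0 2).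
Proof. by apply/rowP => -[[|[|[|//]]] ?]; rewrite !mxE /=; congr (x 0 _); apply: val_inj. Qed.

Lemma row3P x a b c : x 0 0 = a -> x 0 1 = b -> x 0 2 = c -> x = vec3 a b c.
Proof. by move=> <- <- <-; apply: row3_eta. Qed.

Lemma dotv_vec3 a b c a' b' c' :
  dotv (vec3 a b c) (vec3 a' b' c') = a * a' + b * b' + c * c'.
Proof. by rewrite /dotv mxE !big_ord_recl big_ord0 !mxE /= addr0 addrA. Qed.

Lemma scale_vec3 k a b c : k *: vec3 a b c = vec3 (k * a) (k * b) (k * c).
Proof. by apply/rowP => -[[|[|[|//]]] ?]; rewrite !mxE. Qed.

Lemma sub_vec3 a b c a' b' c' :
  vec3 a b c - vec3 a' b' c' = vec3 (a - a') (b - b') (c - c').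
Proof. by apply/rowP => -[[|[|[|//]]] ?]; rewrite !mxE. Qed.

Definition cross x y : 'rV[R]_3 :=
  vec3 (x 0 1 * y 0 2 - x 0 2 * y 0 1) (x 0 2 * y 0 0 - x 0 0 * y 0 2)
       (x 0 0 * y 0 1 - x 0 1 * y 0 0).

Lemma cross_vec3 a b c a' b' c' :
  cross (vec3 a b c) (vec3 a' b' c') =
  vec3 (b * c' - c * b') (c * a' - a * c') (a * b' - b * a').
Proof. by rewrite /cross !mxE. Qed.

Lemma dotvC x y : dotv x y = dotv y x.
Proof. by rewrite [x]row3_eta [y]row3_eta !dotv_vec3; ring. Qed.

Lemma dotvZr k x y : dotv x (k *: y) = k * dotv x y.
Proof. by rewrite [x]row3_eta [y]row3_eta scale_vec3 !dotv_vec3; ring. Qed.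

Lemma dotvZl k x y : dotv (k *: x) y = k * dotv x y.
Proof. by rewrite dotvC dotvZr dotvC. Qed.

Lemma dotv_cross_l x y : dotv x (cross x y) = 0.
Proof. by rewrite [x]row3_eta [y]row3_eta cross_vec3 !dotv_vec3; ring. Qed.

Lemma dotv_cross_r x y : dotv y (cross x y) = 0.
Proof. by rewrite [x]row3_eta [y]row3_eta cross_vec3 !dotv_vec3; ring. Qed.

Lemma dotv_cross x y :
  dotv (cross x y) (cross x y) = dotv x x * dotv y y - dotv x y ^+ 2.
Proof. by rewrite [x]row3_eta [y]row3_eta cross_vec3 !dotv_vec3; ring. Qed.

Lemma dotv_eq0 x : dotv x x = 0 -> x = 0.
Proof.
rewrite [x]row3_eta dotv_vec3 -!expr2 => /eqP.
rewrite paddr_eq0 ?addr_ge0 ?sqr_ge0 // paddr_eq0 ?sqr_ge0 // !sqrf_eq0.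
by case/andP => /andP[/eqP-> /eqP->] /eqP->; apply/rowP => -[[|[|[|//]]] ?]; rewrite !mxE.
Qed.

(* [|n|^2 z = (z.n) n + n × (z × n)] for [n = x × y], and [z × n = (z.y) x - (z.x) y]. *)
Lemma cross_orth2 x y z : dotv z x = 0 -> dotv z y = 0 ->
  dotv (cross x y) (cross x y) *: z = dotv z (cross x y) *: cross x y.
Proof.
move=> zx zy.
have id : dotv (cross x y) (cross x y) *: z - dotv z (cross x y) *: cross x y =
          dotv z y *: cross (cross x y) x - dotv z x *: cross (cross x y) y.
  apply/rowP => j.
  rewrite [x]row3_eta [y]row3_eta [z]row3_eta !cross_vec3 !dotv_vec3 !scale_vec3.
  by case: j => -[|[|[|//]]] ?; rewrite !mxE /=; ring.
by apply/eqP; rewrite -subr_eq0 id zx zy !scale0r subr0.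
Qed.

Lemma cross_orth2_sqr x y z : dotv z z = 1 -> dotv z x = 0 -> dotv z y = 0 ->
  dotv z (cross x y) ^+ 2 = dotv (cross x y) (cross x y).
Proof.
move=> zz zx zy; have := congr1 (dotv z) (cross_orth2 zx zy).
by rewrite !dotvZr zz mulr1 expr2 => ->.
Qed.

Lemma dotv_unit_sqr1 x y : dotv x x = 1 -> dotv y y = 1 -> dotv x y ^+ 2 = 1 ->
  y = dotv x y *: x.
Proof.
move=> xx yy xy; apply/eqP; rewrite -subr_eq0; apply/eqP/dotv_eq0.
have -> : dotv (y - dotv x y *: x) (y - dotv x y *: x) =
          dotv y y - 2 * dotv x y ^+ 2 + dotv x y ^+ 2 * dotv x x.
  by rewrite [x]row3_eta [y]row3_eta scale_vec3 sub_vec3 !dotv_vec3; ring.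
by rewrite xx yy xy; ring.
Qed.

Definition on_line z x := exists k : R, x = k *: z.

Lemma on_line_cross x y z : dotv z x = 0 -> dotv z y = 0 ->
  dotv (cross x y) (cross x y) != 0 -> on_line (cross x y) z.
Proof.
move=> zx zy nz; exists (dotv z (cross x y) / dotv (cross x y) (cross x y)).
by rewrite mulrC -scalerA -(cross_orth2 zx zy) scalerA mulVf // scale1r.
Qed.

Lemma on_line_orth x y z : dotv x x = 1 -> on_line z x -> dotv y x = 0 -> dotv y z = 0.
Proof.
move=> xx [k xE]; rewrite xE dotvZr => /eqP; rewrite mulf_eq0 => /orP[/eqP k0|/eqP //].
by move: xx; rewrite xE k0 scale0r /dotv mul0mx mxE => /eqP; rewrite eq_sym oner_eq0.
Qed.

Lemma vprojZ k x : vproj (k *: x) = k ^+ 2 *: vproj x.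
Proof. by rewrite /vproj !linearZ /= -scalemxAl scalerA expr2. Qed.

Definition line_proj z := (dotv z z)^-1 *: vproj z.

Lemma vproj_on_line x z : dotv x x = 1 -> on_line z x -> vproj x = line_proj z.
Proof.
move=> xx [k xE]; rewrite xE vprojZ.
have kz : k ^+ 2 * dotv z z = 1 by rewrite -xx xE dotvZl dotvZr mulrA expr2.
have z0 : dotv z z != 0 by apply: contra_eq_neq kz => ->; rewrite mulr0 eq_sym oner_eq0.
by rewrite -[k ^+ 2](mulfK z0) kz mul1r.
Qed.

Lemma dotv_mulmx M x y : M *m M^T = 1%:M -> dotv (x *m M) (y *m M) = dotv x y.
Proof. by move=> MMt; rewrite /dotv trmx_mul mulmxA -(mulmxA x) MMt mulmx1. Qed.

Lemma vproj_mulmx M x : vproj (x *m M) = M^T *m vproj x *m M.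
Proof. by rewrite /vproj trmx_mul !mulmxA. Qed.

Lemma orthogonal_mulmx M N : M *m M^T = 1%:M -> N *m N^T = 1%:M ->
  (M *m N) *m (M *m N)^T = 1%:M.
Proof. by move=> MMt NNt; rewrite trmx_mul mulmxA -(mulmxA M) NNt mulmx1. Qed.

Lemma vproj_mulmxK M x : M *m M^T = 1%:M -> M *m vproj (x *m M) *m M^T = vproj x.
Proof. by move=> MMt; rewrite vproj_mulmx !mulmxA MMt mul1mx -mulmxA MMt mulmx1. Qed.

Lemma prob_certain psi x y : dotv psi psi = 1 -> dotv x x = 1 -> prob psi x = 1 ->
  dotv x y ^+ 2 = prob psi y.
Proof.
by rewrite /prob => pp xx px; rewrite (dotv_unit_sqr1 pp xx px) dotvZl exprMn px mul1r.
Qed.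

Lemma dotv_row m n (A : 'M[R]_(m, 3)) (B : 'M[R]_(n, 3)) i j :
  (A *m B^T) i j = dotv (row i A) (row j B).
Proof. by rewrite /dotv !mxE; apply: eq_bigr => k _; rewrite !mxE. Qed.

Lemma orthonormal_frame x y : dotv x x = 1 -> dotv y y = 1 -> dotv x y = 0 ->
  exists M : 'M[R]_3,
    [/\ M *m M^T = 1%:M, x *m M = vec3 1 0 0 & y *m M = vec3 0 1 0].
Proof.
move=> xx yy xy; set N : 'M[R]_3 := \matrix_(i < 3) [:: x; y; cross x y]`_i.
have coord z : z *m N^T = vec3 (dotv z x) (dotv z y) (dotv z (cross x y)).
  by apply/rowP => -[[|[|[|//]]] ?]; rewrite dotv_row row_id rowK !mxE.
have yx : dotv y x = 0 by rewrite dotvC.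
have cc : dotv (cross x y) (cross x y) = 1 by rewrite dotv_cross xx yy xy; ring.
have NNt : N *m N^T = 1%:M.
  apply/matrixP => -[[|[|[|//]]] ?] [[|[|[|//]]] ?]; rewrite dotv_row !rowK !mxE /=;
  by rewrite ?dotv_cross_l ?dotv_cross_r // dotvC ?dotv_cross_l ?dotv_cross_r.
exists N^T; split; first by rewrite trmxK; apply: mulmx1C.
  by rewrite coord xx xy dotv_cross_l.
by rewrite coord yy yx dotv_cross_r.
Qed.

Lemma vec3_mul_diag a b c d1 d2 d3 :
  vec3 a b c *m diag_mx (vec3 d1 d2 d3) = vec3 (a * d1) (b * d2) (c * d3).
Proof. by rewrite mul_mx_diag; apply/rowP => -[[|[|[|//]]] ?]; rewrite !mxE. Qed.

Lemma sign_diag_orthogonal a b c : a ^+ 2 = 1 -> b ^+ 2 = 1 -> c ^+ 2 = 1 ->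
  diag_mx (vec3 a b c) *m (diag_mx (vec3 a b c))^T = 1%:M.
Proof.
move=> a2 b2 c2; rewrite tr_diag_mx mul_mx_diag.
by apply/matrixP => -[[|[|[|//]]] ?] [[|[|[|//]]] ?]; rewrite !mxE /= ?mulr0 ?mul0r -?expr2.
Qed.

End Vectors.

Lemma gadget_equation_half (R : realFieldType) (x y : R) : 0 <= x <= 1 -> 0 <= y <= 1 ->
  (x + y - x * y) * (1 - x * y) = 9 * (x * (1 - x) * (y * (1 - y))) ->
  x + y - x * y != 0 -> 1 - x * y != 0 -> x = 1 / 2 /\ y = 1 / 2.
Proof.
move=> /andP[x0 x1] /andP[y0 y1] E A0 B0.
have sos : (x + y - x * y) * (1 - x * y) - 9 * (x * (1 - x) * (y * (1 - y))) =
    (x - y) ^+ 2 + (2 * x - 1) ^+ 2 * (y * (1 - y)) + (2 * y - 1) ^+ 2 * (x * (1 - x)).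
  by ring.
have T1 : 0 <= (x - y) ^+ 2 by apply: sqr_ge0.
have T2 : 0 <= (2 * x - 1) ^+ 2 * (y * (1 - y)) by rewrite mulr_ge0 ?sqr_ge0 ?mulr_ge0 ?subr_ge0.
have T3 : 0 <= (2 * y - 1) ^+ 2 * (x * (1 - x)) by rewrite mulr_ge0 ?sqr_ge0 ?mulr_ge0 ?subr_ge0.
have /eqP : (x - y) ^+ 2 = 0 by lra.
rewrite sqrf_eq0 subr_eq0 => /eqP yx; subst y.
have /eqP : (2 * x - 1) ^+ 2 * (x * (1 - x)) = 0 by lra.
rewrite mulf_eq0 sqrf_eq0 mulf_eq0 => /orP[/eqP|/orP[/eqP x00|/eqP x11]].
- by split; lra.
- by rewrite x00 !(mul0r, subr0, addr0) eqxx in A0.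
- have x_1 : x = 1 by lra.
  by rewrite x_1 mulr1 subrr eqxx in B0.
Qed.

Section CliftonConfigurations.
Variable R : realType.
Implicit Types (u v : nat -> 'rV[R]_3).

Lemma clifton_config_mulmx M v : M *m M^T = 1%:M ->
  clifton_config v -> clifton_config (fun i => v i *m M).
Proof.
move=> MMt [unit orth]; split => [i /unit | i j /orth]; by rewrite dotv_mulmx.
Qed.

Definition clifton_line (i : nat) : 'rV[R]_3 :=
  match i with
  | 1 => vec3 1 1 (-1) | 2 => vec3 0 1 1 | 3 => vec3 1 0 1 | 4 => vec3 1 0 0
  | 5 => vec3 0 1 0 | 6 => vec3 0 (-1) 1 | 7 => vec3 1 0 (-1) | _ => vec3 1 1 1
  end.

Lemma clifton_line_neq0 i : dotv (clifton_line i) (clifton_line i) != 0.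
Proof.
by apply: lt0r_neq0; case: i => [|[|[|[|[|[|[|[|i]]]]]]]]; rewrite /= dotv_vec3; lra.
Qed.

Lemma clifton_line_cross :
  [/\ cross (clifton_line 2) (clifton_line 3) = clifton_line 1,
      cross (clifton_line 4) (clifton_line 2) = clifton_line 6,
      cross (clifton_line 5) (clifton_line 3) = clifton_line 7 &
      cross (clifton_line 6) (clifton_line 7) = clifton_line 8].
Proof. by split; rewrite /= cross_vec3; congr vec3; ring. Qed.

Lemma clifton_on_lines u : clifton_config u ->
    (forall i, (2 <= i <= 5)%N -> on_line (clifton_line i) (u i)) ->
  forall i, (1 <= i <= 8)%N -> on_line (clifton_line i) (u i).
Proof.
move=> [unit orth] L; set c := clifton_line.
have orth' i j : (i, j) \in clifton_edges -> dotv (u j) (u i) = 0.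
  by move=> ij; rewrite dotvC orth.
have on_cross i j k : dotv (u i) (u j) = 0 -> dotv (u i) (u k) = 0 ->
    (1 <= j <= 8)%N -> (1 <= k <= 8)%N -> on_line (c j) (u j) -> on_line (c k) (u k) ->
    cross (c j) (c k) = c i -> on_line (c i) (u i).
  move=> ij ik j18 k18 Lj Lk cE; rewrite -cE.
  apply: on_line_cross (on_line_orth (unit j j18) Lj ij) (on_line_orth (unit k k18) Lk ik) _.
  by rewrite cE clifton_line_neq0.
have L2 := L 2%N isT; have L3 := L 3%N isT; have L4 := L 4%N isT; have L5 := L 5%N isT.
have [c1E c6E c7E c8E] := clifton_line_cross.
have L1 := on_cross 1%N 2%N 3%N (orth 1%N 2%N isT) (orth 1%N 3%N isT) isT isT L2 L3 c1E.
have L6 := on_cross 6%N 4%N 2%N (orth' 4%N 6%N isT) (orth' 2%N 6%N isT) isT isT L4 L2 c6E.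
have L7 := on_cross 7%N 5%N 3%N (orth' 5%N 7%N isT) (orth' 3%N 7%N isT) isT isT L5 L3 c7E.
have L8 := on_cross 8%N 6%N 7%N (orth' 6%N 8%N isT) (orth' 7%N 8%N isT) isT isT L6 L7 c8E.
by case=> [|[|[|[|[|[|[|[|[|i]]]]]]]]].
Qed.

Section NormalizedGadget.
Variable u : nat -> 'rV[R]_3.
Hypotheses (hu : clifton_config u)
  (u4E : u 4%N = vec3 1 0 0) (u5E : u 5%N = vec3 0 1 0).

Let unit i : (1 <= i <= 8)%N -> dotv (u i) (u i) = 1 := hu.1 i.
Let orth i j : (i, j) \in clifton_edges -> dotv (u i) (u j) = 0 := hu.2 i j.
Let orth' i j : (i, j) \in clifton_edges -> dotv (u j) (u i) = 0.
Proof. by move=> ij; rewrite dotvC orth. Qed.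

Let p := u 2%N 0 1.
Let q := u 2%N 0 2.
Let t := u 3%N 0 0.
Let r := u 3%N 0 2.

Lemma gadget_u2E : u 2%N = vec3 0 p q.
Proof.
have h := @orth 2 4 isT; rewrite u4E [u 2%N]row3_eta dotv_vec3 in h.
by apply: row3P => //; lra.
Qed.

Lemma gadget_u3E : u 3%N = vec3 t 0 r.
Proof.
have h := @orth 3 5 isT; rewrite u5E [u 3%N]row3_eta dotv_vec3 in h.
by apply: row3P => //; lra.
Qed.

Lemma gadget_pq : p ^+ 2 + q ^+ 2 = 1.
Proof. by have := @unit 2 isT; rewrite gadget_u2E dotv_vec3 mul0r add0r -!expr2. Qed.

Lemma gadget_tr : t ^+ 2 + r ^+ 2 = 1.
Proof. by have := @unit 3 isT; rewrite gadget_u3E dotv_vec3 mul0r addr0 -!expr2. Qed.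

Let n6 := vec3 0 (- q) p.
Let n7 := vec3 r 0 (- t).

Lemma gadget_u8_n6 : dotv (u 8%N) n6 = 0.
Proof.
have n6E : cross (u 4%N) (u 2%N) = n6 by rewrite u4E gadget_u2E cross_vec3; congr vec3; ring.
have n6n : dotv n6 n6 = 1 by rewrite dotv_vec3 -gadget_pq; ring.
apply: (on_line_orth (@unit 6 isT)) (@orth' 6 8 isT).
rewrite -n6E; apply: on_line_cross (@orth' 4 6 isT) (@orth' 2 6 isT) _.
by rewrite n6E n6n oner_neq0.
Qed.

Lemma gadget_u8_n7 : dotv (u 8%N) n7 = 0.
Proof.
have n7E : cross (u 5%N) (u 3%N) = n7 by rewrite u5E gadget_u3E cross_vec3; congr vec3; ring.
have n7n : dotv n7 n7 = 1 by rewrite dotv_vec3 -gadget_tr; ring.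
apply: (on_line_orth (@unit 7 isT)) (@orth' 7 8 isT).
rewrite -n7E; apply: on_line_cross (@orth' 5 7 isT) (@orth' 3 7 isT) _.
by rewrite n7E n7n oner_neq0.
Qed.

Let n1 := cross (u 2%N) (u 3%N).
Let n8 := cross n6 n7.

Lemma gadget_n1_norm : dotv n1 n1 = p ^+ 2 + t ^+ 2 - p ^+ 2 * t ^+ 2.
Proof.
rewrite /n1 gadget_u2E gadget_u3E cross_vec3 dotv_vec3.
have q2 : q ^+ 2 = 1 - p ^+ 2 by rewrite -gadget_pq; ring.
have r2 : r ^+ 2 = 1 - t ^+ 2 by rewrite -gadget_tr; ring.
by transitivity (p ^+ 2 * r ^+ 2 + q ^+ 2 * t ^+ 2 + p ^+ 2 * t ^+ 2); [ring | rewrite q2 r2; ring].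
Qed.

Lemma gadget_n8_norm : dotv n8 n8 = 1 - p ^+ 2 * t ^+ 2.
Proof.
rewrite /n8 /n6 /n7 cross_vec3 dotv_vec3.
have q2 : q ^+ 2 = 1 - p ^+ 2 by rewrite -gadget_pq; ring.
have r2 : r ^+ 2 = 1 - t ^+ 2 by rewrite -gadget_tr; ring.
by transitivity (q ^+ 2 * t ^+ 2 + p ^+ 2 * r ^+ 2 + q ^+ 2 * r ^+ 2); [ring | rewrite q2 r2; ring].
Qed.

Lemma gadget_n1_n8 : dotv n1 n8 = p * q * t * r.
Proof. by rewrite /n1 /n8 /n6 /n7 gadget_u2E gadget_u3E !cross_vec3 dotv_vec3; ring. Qed.

Lemma gadget_key : dotv n1 n1 * dotv n8 n8 * dotv (u 1%N) (u 8%N) =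
  dotv (u 1%N) n1 * dotv (u 8%N) n8 * dotv n1 n8.
Proof.
have := congr2 (@dotv R) (cross_orth2 (@orth 1 2 isT) (@orth 1 3 isT))
                    (cross_orth2 gadget_u8_n6 gadget_u8_n7).
by rewrite !(dotvZl, dotvZr) !mulrA.
Qed.

Lemma gadget_nondegenerate : dotv (u 1%N) (u 8%N) != 0 ->
  p ^+ 2 + t ^+ 2 - p ^+ 2 * t ^+ 2 != 0 /\ 1 - p ^+ 2 * t ^+ 2 != 0.
Proof.
have pq := gadget_pq; have tr := gadget_tr.
have E1 := cross_orth2 (@orth 1 2 isT) (@orth 1 3 isT).
have E8 := cross_orth2 gadget_u8_n6 gadget_u8_n7.
move=> D0; split; apply: contra_neq D0 => h.
- have [p0 t0] : p = 0 /\ t = 0.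
    by split; apply/eqP; rewrite -sqrf_eq0; apply/eqP; nra.
  have n8E : n8 = r *: u 2%N.
    by rewrite /n8 /n6 /n7 gadget_u2E p0 t0 cross_vec3 scale_vec3; congr vec3; ring.
  rewrite -/n8 gadget_n8_norm p0 expr0n mul0r subr0 scale1r in E8.
  by rewrite E8 n8E !dotvZr (@orth 1 2 isT) !mulr0.
- have [q0 r0] : q = 0 /\ r = 0.
    by split; apply/eqP; rewrite -sqrf_eq0; apply/eqP; nra.
  have n1E : n1 = - t *: n6.
    by rewrite /n1 /n6 gadget_u2E gadget_u3E q0 r0 cross_vec3 scale_vec3; congr vec3; ring.
  have A1 : p ^+ 2 + t ^+ 2 - p ^+ 2 * t ^+ 2 = 1 by nra.
  rewrite -/n1 gadget_n1_norm A1 scale1r in E1.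
  by rewrite E1 n1E !dotvZl (dotvC n6) gadget_u8_n6 !mulr0.
Qed.

Lemma gadget_angles : dotv (u 1%N) (u 8%N) ^+ 2 = 1 / 9 ->
  p ^+ 2 = 1 / 2 /\ t ^+ 2 = 1 / 2.
Proof.
move=> h18; have pq := gadget_pq; have tr := gadget_tr.
have [A0 B0] : p ^+ 2 + t ^+ 2 - p ^+ 2 * t ^+ 2 != 0 /\ 1 - p ^+ 2 * t ^+ 2 != 0.
  by apply: gadget_nondegenerate; apply: contra_eq_neq h18 => ->; apply/eqP; lra.
have K1 := cross_orth2_sqr (@unit 1 isT) (@orth 1 2 isT) (@orth 1 3 isT).
have K8 := cross_orth2_sqr (@unit 8 isT) gadget_u8_n6 gadget_u8_n7.
have := congr1 (fun z => z ^+ 2) gadget_key.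
rewrite /= !exprMn K1 K8 h18 gadget_n1_n8 gadget_n1_norm gadget_n8_norm => sq.
apply: (gadget_equation_half _ _ _ A0 B0); [nra | nra |].
apply: (mulfI A0); apply: (mulfI B0).
have q2 : q ^+ 2 = 1 - p ^+ 2 by lra.
have r2 : r ^+ 2 = 1 - t ^+ 2 by lra.
rewrite !exprMn q2 r2 in sq; lra.
Qed.

Lemma gadget_reflection : dotv (u 1%N) (u 8%N) ^+ 2 = 1 / 9 ->
  exists D : 'M[R]_3, D *m D^T = 1%:M /\
    forall i, (2 <= i <= 5)%N -> on_line (clifton_line i) (u i *m D).
Proof.
(* The reflection [diag (s s', 1, s)] puts [u 2] and [u 3] on the lines of (0,1,1) and (1,0,1). *)
move=> h18; have [p2 t2] := gadget_angles h18.
have q2 : q ^+ 2 = 1 / 2 by have := gadget_pq; lra.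
have r2 : r ^+ 2 = 1 / 2 by have := gadget_tr; lra.
set s := 2 * p * q; set s' := 2 * t * r.
have s2 : s ^+ 2 = 1 by rewrite !exprMn p2 q2; lra.
have s'2 : s' ^+ 2 = 1 by rewrite !exprMn t2 r2; lra.
have qs : q * s = p by transitivity (2 * p * q ^+ 2); [rewrite /s; ring | rewrite q2; lra].
have rs' : r = t * s' by transitivity (2 * t ^+ 2 * r); [rewrite t2; lra | rewrite /s'; ring].
exists (diag_mx (vec3 (s * s') 1 s)); split.
  by apply: sign_diag_orthogonal; [rewrite exprMn s2 s'2 mulr1 | exact: expr1n |].
case=> [|[|[|[|[|[|i]]]]]] //= _; rewrite ?gadget_u2E ?gadget_u3E ?u4E ?u5E vec3_mul_diag.
- by exists p; rewrite scale_vec3 qs; congr vec3; ring.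
- by exists (t * s * s'); rewrite scale_vec3 rs'; congr vec3; ring.
- by exists (s * s'); rewrite scale_vec3; congr vec3; ring.
- by exists 1; rewrite scale_vec3; congr vec3; ring.
Qed.

End NormalizedGadget.

Lemma clifton_canonical v : clifton_config v -> dotv (v 1%N) (v 8%N) ^+ 2 = 1 / 9 ->
  exists F : 'M[R]_3, F *m F^T = 1%:M /\
    forall i, (1 <= i <= 8)%N -> vproj (v i *m F) = line_proj (clifton_line i).
Proof.
move=> hv h18.
have [M [MMt e4 e5]] := orthonormal_frame (hv.1 4%N isT) (hv.1 5%N isT) (hv.2 4%N 5%N isT).
have hu := clifton_config_mulmx MMt hv.
have [D [DDt L]] : exists D : 'M[R]_3, D *m D^T = 1%:M /\
    forall i, (2 <= i <= 5)%N -> on_line (clifton_line i) (v i *m M *m D).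
  by apply: (gadget_reflection hu e4 e5); rewrite dotv_mulmx.
exists (M *m D); split; first exact: orthogonal_mulmx.
move=> i i18; rewrite mulmxA; apply: vproj_on_line.
  by rewrite !dotv_mulmx // hv.1.
exact: (clifton_on_lines (clifton_config_mulmx DDt hu)).
Qed.

End CliftonConfigurations.

Theorem mainTheorem5 (R : realType) (v w : nat -> 'rV[R]_3) (psi phi : 'rV[R]_3) :
  clifton_config v -> dotv psi psi = 1 ->
  prob psi (v 1%N) = 1 -> prob psi (v 8%N) = 1 / 9%:R ->
  clifton_config w -> dotv phi phi = 1 ->
  prob phi (w 1%N) = 1 -> prob phi (w 8%N) = 1 / 9%:R ->
  exists U : 'M[R]_3, U *m U^T = 1%:M /\
    ((forall i : nat, (1 <= i <= 8)%N -> vproj (w i) = U^T *m vproj (v i) *m U) \/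
     (forall i : nat, (1 <= i <= 8)%N ->
        vproj (w i) = U^T *m vproj (v (clifton_swap i)) *m U)).
Proof.
move=> hv hpsi v1 v8 hw hphi w1 w8.
have [F [FFt hF]] := clifton_canonical hv (etrans (prob_certain _ hpsi (hv.1 1%N isT) v1) v8).
have [G [GGt hG]] := clifton_canonical hw (etrans (prob_certain _ hphi (hw.1 1%N isT) w1) w8).
have GtG : G^T *m G^T^T = 1%:M by rewrite trmxK; apply: mulmx1C.
exists (F *m G^T); split; first exact: orthogonal_mulmx.
left => i i18.
rewrite -(vproj_mulmxK (w i) GGt) hG // -(hF i i18) vproj_mulmx.
by rewrite trmx_mul trmxK !mulmxA.
Qed.
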